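(* Let $D=\{z\in\mathbb C^2:\ |z_2|^2+x_1^2+y_1^4<1\}$ with defining function $\rho$, and fix $\zeta\in bD$. Choose coordinates $w=(w_1,w_2)$, $w_j=u_j+iv_j$, obtained from the standard coordinates of $\mathbb C^2$ by a translation and a unitary linear transformation, such that $\zeta=(0,0)$ and $\frac{\partial\rho}{\partial v_2}(\zeta)=|\nabla\rho(\zeta)|$, $\frac{\partial\rho}{\partial u_1}(\zeta)=\frac{\partial\rho}{\partial v_1}(\zeta)=\frac{\partial\rho}{\partial u_2}(\zeta)=0$, so that near $\zeta$ the boundary $bD$ is a graph $v_2=\Phi(u_1,v_1,u_2)$ with $\Phi$ smooth, $\Phi(0,0,0)=0$, $\nabla\Phi(0,0,0)=0$; regard points $w\in bD$ near $\zeta$ as functions of the parameters $(u_1,v_1,u_2)$. Then, for $\delta>0$ sufficiently small, $$\frac{\partial\Delta}{\partial u_2}(w,z)\neq0\quad\text{whenever } w\in bD,\ |w-\zeta|<\delta,\ \text{and } |z-\zeta|<\delta.$$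
   Context: Here $\rho(w)=|w_2|^2+u_1^2+v_1^4-1$ in the original coordinates, and $\Delta(w,z)=\langle\partial\rho(w),w-z\rangle=\sum_{j=1}^2\frac{\partial\rho}{\partial w_j}(w)(w_j-z_j)$; the derivative $\partial/\partial u_2$ is taken with respect to the graph parameter $u_2$ of $w\in bD$, with $z$ fixed. *)

From Stdlib Require Import Reals.
From Coquelicot Require Import Coquelicot.
Open Scope R_scope.

Definition C2 := (C * C)%type.

Definition C2sub (w z : C2) : C2 := (Cminus (fst w) (fst z), Cminus (snd w) (snd z)).
Definition C2norm (w : C2) : R := sqrt (Cmod (fst w) ^ 2 + Cmod (snd w) ^ 2).
Definition C2dist (w z : C2) : R := C2norm (C2sub w z).

Definition rho (w : C2) : R :=
  Cmod (snd w) ^ 2 + (fst (fst w)) ^ 2 + (snd (fst w)) ^ 4 - 1.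
Definition inD (w : C2) : Prop := rho w < 0.

Definition bD (w : C2) : Prop :=
  forall e : R, 0 < e ->
    (exists p, C2dist p w < e /\ inD p) /\ (exists p, C2dist p w < e /\ ~ inD p).

Definition pd_x1 (f : C2 -> R) (w : C2) : R :=
  Derive (fun t => f ((t, snd (fst w)), snd w)) (fst (fst w)).
Definition pd_y1 (f : C2 -> R) (w : C2) : R :=
  Derive (fun t => f ((fst (fst w), t), snd w)) (snd (fst w)).
Definition pd_x2 (f : C2 -> R) (w : C2) : R :=
  Derive (fun t => f (fst w, (t, snd (snd w)))) (fst (snd w)).
Definition pd_y2 (f : C2 -> R) (w : C2) : R :=
  Derive (fun t => f (fst w, (fst (snd w), t))) (snd (snd w)).

Definition gradnorm (f : C2 -> R) (w : C2) : R :=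
  sqrt (pd_x1 f w ^ 2 + pd_y1 f w ^ 2 + pd_x2 f w ^ 2 + pd_y2 f w ^ 2).

(** Complex (Wirtinger) derivatives d f / d z_j = (1/2)(d/dx_j - i d/dy_j). *)
Definition dz1 (f : C2 -> R) (w : C2) : C := (/2 * pd_x1 f w, - (/2 * pd_y1 f w)).
Definition dz2 (f : C2 -> R) (w : C2) : C := (/2 * pd_x2 f w, - (/2 * pd_y2 f w)).

(** Delta(w,z) = sum_j d rho/d w_j (w) (w_j - z_j)  (original coordinates). *)
Definition DeltaD (w z : C2) : C :=
  Cplus (Cmult (dz1 rho w) (Cminus (fst w) (fst z)))
        (Cmult (dz2 rho w) (Cminus (snd w) (snd z))).

(** The 2x2 complex matrix U = [[a, b], [c, d]] is unitary (U U^* = I). *)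
Definition is_unitary (a b c d : C) : Prop :=
  Cmod a ^ 2 + Cmod b ^ 2 = 1 /\ Cmod c ^ 2 + Cmod d ^ 2 = 1 /\
  Cplus (Cmult a (Cconj c)) (Cmult b (Cconj d)) = RtoC 0.

(** New coordinates w' = U (w - zeta); inverse map w = zeta + U^* w'. *)
Definition to_orig (zeta : C2) (a b c d : C) (w' : C2) : C2 :=
  (Cplus (fst zeta) (Cplus (Cmult (Cconj a) (fst w')) (Cmult (Cconj c) (snd w'))),
   Cplus (snd zeta) (Cplus (Cmult (Cconj b) (fst w')) (Cmult (Cconj d) (snd w')))).

Definition graph_pt (Phi : R -> R -> R -> R) (u1 v1 u2 : R) : C2 :=
  ((u1, v1), (u2, Phi u1 v1 u2)).

Definition pd1 (F : R -> R -> R -> R) : R -> R -> R -> R :=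
  fun x y z => Derive (fun t => F t y z) x.
Definition pd2 (F : R -> R -> R -> R) : R -> R -> R -> R :=
  fun x y z => Derive (fun t => F x t z) y.
Definition pd3 (F : R -> R -> R -> R) : R -> R -> R -> R :=
  fun x y z => Derive (fun t => F x y t) z.

Definition cont3 (F : R -> R -> R -> R) (x y z : R) : Prop :=
  forall e : R, 0 < e -> exists d : R, 0 < d /\
    forall x' y' z', Rabs (x' - x) < d -> Rabs (y' - y) < d -> Rabs (z' - z) < d ->
      Rabs (F x' y' z' - F x y z) < e.

Fixpoint Ck (k : nat) (U : R -> R -> R -> Prop) (F : R -> R -> R -> R) : Prop :=
  (forall x y z, U x y z -> cont3 F x y z) /\
  match k with
  | O => True
  | S k' =>
      (forall x y z, U x y z ->
         ex_derive (fun t => F t y z) x /\ ex_derive (fun t => F x t z) y /\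
         ex_derive (fun t => F x y t) z) /\
      Ck k' U (pd1 F) /\ Ck k' U (pd2 F) /\ Ck k' U (pd3 F)
  end.

Definition smooth_on (U : R -> R -> R -> Prop) (F : R -> R -> R -> R) : Prop :=
  forall k, Ck k U F.

Definition ball3 (r : R) (x y z : R) : Prop := sqrt (x ^ 2 + y ^ 2 + z ^ 2) < r.

(* Along the boundary curve t |-> w(t) with (u1, v1) fixed, the u2-derivative of
   Im Delta(w, z) is a polynomial in w, z and the slope dPhi/du2, hence continuous
   in them. At w = z = zeta with zero slope it equals -(1/2) drho/dv2 (zeta)
   = -(1/2) |grad rho(zeta)|, which is nonzero since grad rho vanishes only at the
   origin, an interior point of D. The coordinate change is an isometry and dPhi/du2
   is continuous and vanishes at 0, so w, z and the slope stay close to these central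
   values once |w - zeta| and |z - zeta| are small. *)

From Stdlib Require Import Reals Lra Psatz.
From Coquelicot Require Import Coquelicot.
Open Scope R_scope.

Lemma Cmod_sqr (z : C) : Cmod z ^ 2 = fst z ^ 2 + snd z ^ 2.
Proof. unfold Cmod; apply pow2_sqrt; nra. Qed.

Lemma rho_coords (w : C2) :
  rho w = fst (fst w) ^ 2 + snd (fst w) ^ 4 + fst (snd w) ^ 2 + snd (snd w) ^ 2 - 1.
Proof. unfold rho; rewrite Cmod_sqr; ring. Qed.

Lemma pd_x1_rho (w : C2) : pd_x1 rho w = 2 * fst (fst w).
Proof.
  unfold pd_x1; apply is_derive_unique.
  eapply is_derive_ext; [intro t; symmetry; apply rho_coords|].
  simpl; auto_derive; auto; ring.
Qed.

Lemma pd_y1_rho (w : C2) : pd_y1 rho w = 4 * snd (fst w) ^ 3.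
Proof.
  unfold pd_y1; apply is_derive_unique.
  eapply is_derive_ext; [intro t; symmetry; apply rho_coords|].
  simpl; auto_derive; auto; ring.
Qed.

Lemma pd_x2_rho (w : C2) : pd_x2 rho w = 2 * fst (snd w).
Proof.
  unfold pd_x2; apply is_derive_unique.
  eapply is_derive_ext; [intro t; symmetry; apply rho_coords|].
  simpl; auto_derive; auto; ring.
Qed.

Lemma pd_y2_rho (w : C2) : pd_y2 rho w = 2 * snd (snd w).
Proof.
  unfold pd_y2; apply is_derive_unique.
  eapply is_derive_ext; [intro t; symmetry; apply rho_coords|].
  simpl; auto_derive; auto; ring.
Qed.

Lemma C2norm_coords (w : C2) :
  Rabs (fst (fst w)) <= C2norm w /\ Rabs (snd (fst w)) <= C2norm w /\
  Rabs (fst (snd w)) <= C2norm w /\ Rabs (snd (snd w)) <= C2norm w.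
Proof.
  unfold C2norm; rewrite !Cmod_sqr.
  assert (Hcoord : forall x y u v, Rabs x <= sqrt (x ^ 2 + y ^ 2 + u ^ 2 + v ^ 2)).
  { intros x y u v; rewrite <- (sqrt_pow2 (Rabs x)) by apply Rabs_pos.
    apply sqrt_le_1_alt; rewrite pow2_abs; nra. }
  set (x1 := fst (fst w)); set (y1 := snd (fst w)); set (x2 := fst (snd w)); set (y2 := snd (snd w)).
  repeat split.
  - replace (x1 ^ 2 + y1 ^ 2 + (x2 ^ 2 + y2 ^ 2)) with (x1 ^ 2 + y1 ^ 2 + x2 ^ 2 + y2 ^ 2) by ring.
    apply Hcoord.
  - replace (x1 ^ 2 + y1 ^ 2 + (x2 ^ 2 + y2 ^ 2)) with (y1 ^ 2 + x1 ^ 2 + x2 ^ 2 + y2 ^ 2) by ring.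
    apply Hcoord.
  - replace (x1 ^ 2 + y1 ^ 2 + (x2 ^ 2 + y2 ^ 2)) with (x2 ^ 2 + x1 ^ 2 + y1 ^ 2 + y2 ^ 2) by ring.
    apply Hcoord.
  - replace (x1 ^ 2 + y1 ^ 2 + (x2 ^ 2 + y2 ^ 2)) with (y2 ^ 2 + x1 ^ 2 + y1 ^ 2 + x2 ^ 2) by ring.
    apply Hcoord.
Qed.

Lemma origin_not_bD : ~ bD (RtoC 0, RtoC 0).
Proof.
  intros H; destruct (H (1 / 2) ltac:(lra)) as [_ [p [Hp Hout]]]; apply Hout.
  unfold C2dist in Hp.
  destruct (C2norm_coords (C2sub p (RtoC 0, RtoC 0))) as (H1 & H2 & H3 & H4).
  destruct p as [[x1 y1] [x2 y2]]; cbn [fst snd C2sub Cminus Cplus Copp RtoC] in *.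
  rewrite Ropp_0, !Rplus_0_r in *.
  unfold inD; rewrite rho_coords; cbn [fst snd].
  assert (Hsq : forall t, Rabs t < 1 / 2 -> t ^ 2 < 1 / 4)
    by (intros t Ht; rewrite <- pow2_abs; pose proof (Rabs_pos t); nra).
  pose proof (Hsq x1 ltac:(lra)); pose proof (Hsq y1 ltac:(lra)).
  pose proof (Hsq x2 ltac:(lra)); pose proof (Hsq y2 ltac:(lra)).
  nra.
Qed.

Lemma gradnorm_rho_pos (zeta : C2) : bD zeta -> 0 < gradnorm rho zeta.
Proof.
  intros Hb; unfold gradnorm; rewrite pd_x1_rho, pd_y1_rho, pd_x2_rho, pd_y2_rho.
  apply sqrt_lt_R0.
  destruct zeta as [[x1 y1] [x2 y2]]; cbn [fst snd].
  destruct (Rlt_or_le 0 ((2 * x1) ^ 2 + (4 * y1 ^ 3) ^ 2 + (2 * x2) ^ 2 + (2 * y2) ^ 2))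
    as [Hpos | Hle]; [exact Hpos | exfalso].
  assert (Hx1 : x1 = 0) by nra; assert (Hx2 : x2 = 0) by nra; assert (Hy2 : y2 = 0) by nra.
  assert (Hy1 : y1 = 0).
  { destruct (Req_dec y1 0) as [| Hne]; [assumption|].
    exfalso; apply (pow_nonzero y1 3 Hne); nra. }
  subst; exact (origin_not_bD Hb).
Qed.

Lemma C2dist_to_orig (zeta : C2) (a b c d : C) (w' : C2) :
  is_unitary a b c d -> C2dist (to_orig zeta a b c d w') zeta = C2norm w'.
Proof.
  intros (Hab & Hcd & Hg); unfold C2dist, C2norm; f_equal.
  pose proof (f_equal fst Hg) as Hg1; pose proof (f_equal snd Hg) as Hg2; clear Hg.
  rewrite !Cmod_sqr in *.
  destruct zeta as [[p1 q1] [p2 q2]], a as [ar ai], b as [br bi], c as [cr ci], d as [dr di],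
    w' as [[x y] [u v]]; cbn [fst snd to_orig C2sub Cminus Cplus Cmult Cconj Copp RtoC] in *.
  transitivity
    ((ar ^ 2 + ai ^ 2 + (br ^ 2 + bi ^ 2)) * (x ^ 2 + y ^ 2)
     + (cr ^ 2 + ci ^ 2 + (dr ^ 2 + di ^ 2)) * (u ^ 2 + v ^ 2)
     + 2 * ((ar * cr - ai * - ci + (br * dr - bi * - di)) * (x * u + y * v)
            + (ar * - ci + ai * cr + (br * - di + bi * dr)) * (y * u - x * v))); [ring|].
  rewrite Hab, Hcd, Hg1, Hg2; ring.
Qed.

Lemma ball3_of_C2norm (Phi : R -> R -> R -> R) (u1 v1 u2 r : R) :
  C2norm (graph_pt Phi u1 v1 u2) < r -> ball3 r u1 v1 u2.
Proof.
  unfold C2norm, ball3; rewrite !Cmod_sqr; cbn [fst snd graph_pt].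
  apply Rle_lt_trans, sqrt_le_1_alt; nra.
Qed.

Lemma graph_slope_small (Phi : R -> R -> R -> R) (r : R) :
  0 < r -> Ck 1 (ball3 r) Phi -> pd3 Phi 0 0 0 = 0 ->
  forall eps, 0 < eps -> exists delta, 0 < delta /\
    forall u1 v1 u2, C2norm (graph_pt Phi u1 v1 u2) < delta ->
      ex_derive (fun t => Phi u1 v1 t) u2 /\ Rabs (pd3 Phi u1 v1 u2) < eps.
Proof.
  intros Hr [_ [Hder [_ [_ [Hcont _]]]]] Hpd3 eps Heps.
  assert (Hball0 : ball3 r 0 0 0).
  { unfold ball3; replace (0 ^ 2 + 0 ^ 2 + 0 ^ 2) with 0 by ring; rewrite sqrt_0; exact Hr. }
  destruct (Hcont 0 0 0 Hball0 eps Heps) as [delta [Hdelta Hnear]].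
  exists (Rmin delta r); split; [apply Rmin_pos; assumption|].
  intros u1 v1 u2 Hw; split.
  - apply Hder, (ball3_of_C2norm Phi).
    eapply Rlt_le_trans; [exact Hw | apply Rmin_r].
  - destruct (C2norm_coords (graph_pt Phi u1 v1 u2)) as (Hu1 & Hv1 & Hu2 & _).
    cbn [fst snd graph_pt] in Hu1, Hv1, Hu2.
    assert (Hw' : C2norm (graph_pt Phi u1 v1 u2) < delta)
      by (eapply Rlt_le_trans; [exact Hw | apply Rmin_l]).
    rewrite <- (Rminus_0_r (pd3 Phi u1 v1 u2)), <- Hpd3.
    apply Hnear; rewrite Rminus_0_r; lra.
Qed.

Lemma re_DeltaD (w z : C2) : fst (DeltaD w z) =
  fst (fst w) * (fst (fst w) - fst (fst z)) + 2 * snd (fst w) ^ 3 * (snd (fst w) - snd (fst z))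
  + fst (snd w) * (fst (snd w) - fst (snd z)) + snd (snd w) * (snd (snd w) - snd (snd z)).
Proof.
  unfold DeltaD, dz1, dz2; rewrite pd_x1_rho, pd_y1_rho, pd_x2_rho, pd_y2_rho; simpl; field.
Qed.

Lemma im_DeltaD (w z : C2) : snd (DeltaD w z) =
  fst (fst w) * (snd (fst w) - snd (fst z)) - 2 * snd (fst w) ^ 3 * (fst (fst w) - fst (fst z))
  + fst (snd w) * (snd (snd w) - snd (snd z)) - snd (snd w) * (fst (snd w) - fst (snd z)).
Proof.
  unfold DeltaD, dz1, dz2; rewrite pd_x1_rho, pd_y1_rho, pd_x2_rho, pd_y2_rho; simpl; field.
Qed.

(* The velocity U^* (0, 1 + i s) of t |-> to_orig zeta a b c d (graph_pt Phi u1 v1 t)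
   at a point where the slope dPhi/du2 equals s. *)
Definition velocity (c d : C) (s : R) : C2 :=
  (Cmult (Cconj c) (1, s), Cmult (Cconj d) (1, s)).

(* The derivative of Im Delta(., z) at [w] in the real direction [xi]. *)
Definition dIm_Delta (w z xi : C2) : R :=
  let x1 := fst (fst w) in let y1 := snd (fst w) in
  let x2 := fst (snd w) in let y2 := snd (snd w) in
  let a1 := fst (fst xi) in let b1 := snd (fst xi) in
  let a2 := fst (snd xi) in let b2 := snd (snd xi) in
  a1 * (y1 - snd (fst z)) + x1 * b1 - 6 * y1 ^ 2 * b1 * (x1 - fst (fst z)) - 2 * y1 ^ 3 * a1
  + a2 * (y2 - snd (snd z)) + x2 * b2 - b2 * (x2 - fst (snd z)) - y2 * a2.

Lemma is_derive_im_Delta_curve (zeta : C2) (a b c d : C) (Phi : R -> R -> R -> R)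
    (u1 v1 : R) (z : C2) (u2 : R) :
  ex_derive (fun t => Phi u1 v1 t) u2 ->
  is_derive (fun t => snd (DeltaD (to_orig zeta a b c d (graph_pt Phi u1 v1 t)) z)) u2
    (dIm_Delta (to_orig zeta a b c d (graph_pt Phi u1 v1 u2)) z
       (velocity c d (pd3 Phi u1 v1 u2))).
Proof.
  intros HPhi; unfold pd3.
  eapply is_derive_ext; [intro t; symmetry; apply im_DeltaD|].
  destruct zeta as [[p1 q1] [p2 q2]], a as [ar ai], b as [br bi], c as [cr ci], d as [dr di].
  unfold dIm_Delta; simpl; auto_derive; [repeat split; exact HPhi | ring].
Qed.

Lemma ex_derive_re_Delta_curve (zeta : C2) (a b c d : C) (Phi : R -> R -> R -> R)
    (u1 v1 : R) (z : C2) (u2 : R) :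
  ex_derive (fun t => Phi u1 v1 t) u2 ->
  ex_derive (fun t => fst (DeltaD (to_orig zeta a b c d (graph_pt Phi u1 v1 t)) z)) u2.
Proof.
  intros HPhi.
  eapply ex_derive_ext; [intro t; symmetry; apply re_DeltaD|].
  destruct zeta as [[p1 q1] [p2 q2]], a as [ar ai], b as [br bi], c as [cr ci], d as [dr di].
  simpl; auto_derive; repeat split; exact HPhi.
Qed.

Lemma dIm_Delta_center (zeta : C2) (a b c d : C) :
  dIm_Delta zeta zeta (velocity c d 0) =
  - pd_y2 (fun w' => rho (to_orig zeta a b c d w')) (RtoC 0, RtoC 0) / 2.
Proof.
  destruct zeta as [[p1 q1] [p2 q2]], a as [ar ai], b as [br bi], c as [cr ci], d as [dr di].
  replace (pd_y2 _ _) with (2 * p1 * ci + 4 * q1 ^ 3 * cr + 2 * p2 * di + 2 * q2 * dr).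
  - unfold dIm_Delta; simpl; field.
  - symmetry; unfold pd_y2; apply is_derive_unique.
    eapply is_derive_ext; [intro t; symmetry; apply rho_coords|].
    simpl; auto_derive; auto; ring.
Qed.

Lemma dIm_Delta_center_neq_0 (zeta : C2) (a b c d : C) :
  bD zeta ->
  pd_y2 (fun w' => rho (to_orig zeta a b c d w')) (RtoC 0, RtoC 0) = gradnorm rho zeta ->
  dIm_Delta zeta zeta (velocity c d 0) <> 0.
Proof.
  intros Hb Hnormal; rewrite (dIm_Delta_center zeta a b), Hnormal.
  pose proof (gradnorm_rho_pos zeta Hb); lra.
Qed.

Lemma continuous_fst_any {V W : UniformSpace} (x : V * W) : continuous fst x.
Proof. destruct x; apply continuous_fst. Qed.

Lemma continuous_snd_any {V W : UniformSpace} (x : V * W) : continuous snd x.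
Proof. destruct x; apply continuous_snd. Qed.

Lemma continuous_fst_comp {U V W : UniformSpace} (f : U -> V * W) (x : U) :
  continuous f x -> continuous (fun X => fst (f X)) x.
Proof. intros Hf; exact (continuous_comp f fst x Hf (continuous_fst_any _)). Qed.

Lemma continuous_snd_comp {U V W : UniformSpace} (f : U -> V * W) (x : U) :
  continuous f x -> continuous (fun X => snd (f X)) x.
Proof. intros Hf; exact (continuous_comp f snd x Hf (continuous_snd_any _)). Qed.

Lemma continuous_Rplus {U : UniformSpace} (f g : U -> R) (x : U) :
  continuous f x -> continuous g x -> continuous (fun X => f X + g X) x.
Proof. exact (continuous_plus f g x). Qed.

Lemma continuous_Rminus {U : UniformSpace} (f g : U -> R) (x : U) :
  continuous f x -> continuous g x -> continuous (fun X => f X - g X) x.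
Proof. exact (continuous_minus f g x). Qed.

Lemma continuous_Rmult {U : UniformSpace} (f g : U -> R) (x : U) :
  continuous f x -> continuous g x -> continuous (fun X => f X * g X) x.
Proof. exact (continuous_mult f g x). Qed.

Ltac continuity_poly :=
  repeat match goal with
  | |- continuous (fun _ => ?c) _ => apply continuous_const
  | |- continuous (fun X => X) _ => apply continuous_id
  | |- continuous (fun X => @?f X - @?g X) _ => apply (continuous_Rminus f g)
  | |- continuous (fun X => @?f X + @?g X) _ => apply (continuous_Rplus f g)
  | |- continuous (fun X => @?f X * @?g X) _ => apply (continuous_Rmult f g)
  | |- continuous (fun X => fst (@?f X)) _ => apply (continuous_fst_comp f)
  | |- continuous (fun X => snd (@?f X)) _ => apply (continuous_snd_comp f)
  end.

Lemma ball_R (x e y : R) : ball x e y <-> Rabs (y - x) < e.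
Proof. reflexivity. Qed.

Lemma continuous_neq_0_locally {U : UniformSpace} (f : U -> R) (x : U) :
  continuous f x -> f x <> 0 -> locally x (fun y => f y <> 0).
Proof.
  intros Hf Hx; apply (Hf (fun y => y <> 0)).
  exists (mkposreal _ (Rabs_pos_lt _ Hx)); intros y Hy Hy0; simpl in Hy.
  rewrite Hy0, ball_R, Rminus_0_l, Rabs_Ropp in Hy; lra.
Qed.

(* C2 carries the same uniform structure, but stating continuity on the plain real
   product lets the canonical structures of the projection lemmas be inferred. *)
Notation R4 := ((R * R) * (R * R))%type.

Lemma continuous_dIm_Delta (c d : C) (X : R4 * R4 * R) :
  continuous
    (fun X : R4 * R4 * R => dIm_Delta (fst (fst X)) (snd (fst X)) (velocity c d (snd X))) X.
Proof. destruct c, d; unfold dIm_Delta, velocity; simpl; continuity_poly. Qed.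

Lemma ball_of_C2dist (p q : C2) (e : R) : C2dist q p < e -> ball (p : R4) e (q : R4).
Proof.
  unfold C2dist; intros H.
  destruct (C2norm_coords (C2sub q p)) as (H1 & H2 & H3 & H4).
  destruct p as [[p1 q1] [p2 q2]], q as [[x1 y1] [x2 y2]].
  repeat split; eapply Rle_lt_trans; eassumption.
Qed.

Lemma dIm_Delta_neq_0_near (zeta : C2) (c d : C) :
  dIm_Delta zeta zeta (velocity c d 0) <> 0 ->
  exists eps, 0 < eps /\ forall w z s,
    C2dist w zeta < eps -> C2dist z zeta < eps -> Rabs s < eps ->
    dIm_Delta w z (velocity c d s) <> 0.
Proof.
  intros Hcenter.
  destruct (continuous_neq_0_locally _ ((zeta, zeta), 0) (continuous_dIm_Delta c d _) Hcenter)
    as [eps Heps].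
  exists eps; split; [apply cond_pos|].
  intros w z s Hw Hz Hs.
  apply (Heps ((w, z), s)); split; [split|]; cbn [fst snd].
  - exact (ball_of_C2dist _ _ _ Hw).
  - exact (ball_of_C2dist _ _ _ Hz).
  - apply ball_R; rewrite Rminus_0_r; exact Hs.
Qed.

Theorem lemma2p2 :
  forall (zeta : C2), bD zeta ->
  forall (a b c d : C), is_unitary a b c d ->
  (* coordinate normalisation: rho in the new coordinates w' *)
  pd_x1 (fun w' => rho (to_orig zeta a b c d w')) (RtoC 0, RtoC 0) = 0 ->
  pd_y1 (fun w' => rho (to_orig zeta a b c d w')) (RtoC 0, RtoC 0) = 0 ->
  pd_x2 (fun w' => rho (to_orig zeta a b c d w')) (RtoC 0, RtoC 0) = 0 ->
  pd_y2 (fun w' => rho (to_orig zeta a b c d w')) (RtoC 0, RtoC 0) = gradnorm rho zeta ->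
  forall (Phi : R -> R -> R -> R) (r : R), 0 < r ->
  (* near zeta, bD is the graph v2 = Phi(u1, v1, u2) *)
  (forall w' : C2, C2norm w' < r ->
     (bD (to_orig zeta a b c d w') <->
      snd (snd w') = Phi (fst (fst w')) (snd (fst w')) (fst (snd w')))) ->
  smooth_on (ball3 r) Phi ->
  Phi 0 0 0 = 0 ->
  pd1 Phi 0 0 0 = 0 -> pd2 Phi 0 0 0 = 0 -> pd3 Phi 0 0 0 = 0 ->
  exists delta : R, 0 < delta /\
    forall (u1 v1 u2 : R) (z : C2),
      let w := to_orig zeta a b c d (graph_pt Phi u1 v1 u2) in
      bD w -> C2dist w zeta < delta -> C2dist z zeta < delta ->
      let f := fun t : R => DeltaD (to_orig zeta a b c d (graph_pt Phi u1 v1 t)) z in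
      ex_derive (fun t => fst (f t)) u2 /\ ex_derive (fun t => snd (f t)) u2 /\
      (Derive (fun t => fst (f t)) u2, Derive (fun t => snd (f t)) u2) <> (0, 0).
Proof.
  intros zeta Hzeta a b c d Hunit _ _ _ Hnormal Phi r Hr _ Hsmooth _ _ _ Hpd3.
  destruct (dIm_Delta_neq_0_near zeta c d (dIm_Delta_center_neq_0 zeta a b c d Hzeta Hnormal))
    as [eps [Heps Hnear]].
  destruct (graph_slope_small Phi r Hr (Hsmooth 1%nat) Hpd3 eps Heps)
    as [delta [Hdelta Hslope]].
  exists (Rmin eps delta); split; [apply Rmin_pos; assumption|].
  intros u1 v1 u2 z w _ Hw Hz f; subst w f.
  rewrite C2dist_to_orig in Hw by exact Hunit.
  destruct (Hslope u1 v1 u2 (Rlt_le_trans _ _ _ Hw (Rmin_r _ _))) as [HPhi Hs].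
  pose proof (is_derive_im_Delta_curve zeta a b c d Phi u1 v1 z u2 HPhi) as Him.
  split; [exact (ex_derive_re_Delta_curve zeta a b c d Phi u1 v1 z u2 HPhi)|].
  split; [eexists; exact Him|].
  intros Heq; refine (Hnear _ z _ _ (Rlt_le_trans _ _ _ Hz (Rmin_l _ _)) Hs _).
  - rewrite C2dist_to_orig by exact Hunit; exact (Rlt_le_trans _ _ _ Hw (Rmin_l _ _)).
  - rewrite <- (is_derive_unique _ _ _ Him); exact (f_equal snd Heq).
Qed.
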